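(* Let $R>0$ and let $\mathbf L\colon\mathbb R^n\times\mathbb R^m\to\mathbb R$ be an $R$-smooth convex-concave function with a saddle point $\mathbf z^\star$. Let $\alpha_0=\frac{0.618}{R}$, $\alpha_{k+1}=\alpha_k\left(1-\frac{1}{(k+1)(k+3)}\frac{\alpha_k^2R^2}{1-\alpha_k^2R^2}\right)$ for $k\ge0$, let $\mathbf z^0\in\mathbb R^n\times\mathbb R^m$, and define $$\mathbf z^{k+1/2}=\mathbf z^k+\tfrac{1}{k+2}(\mathbf z^0-\mathbf z^k)-\alpha_k\mathbf G(\mathbf z^k),\qquad \mathbf z^{k+1}=\mathbf z^k+\tfrac{1}{k+2}(\mathbf z^0-\mathbf z^k)-\alpha_k\mathbf G(\mathbf z^{k+1/2}),\quad k\ge0.$$ Then for all $k\ge0$, $$\|\nabla\mathbf L(\mathbf z^k)\|^2\le\frac{27R^2\|\mathbf z^0-\mathbf z^\star\|^2}{(k+1)(k+2)}.$$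
   Context: Write $\mathbf z=(\mathbf x,\mathbf y)$. $\mathbf L$ convex-concave: convex in $\mathbf x$ for fixed $\mathbf y$, concave in $\mathbf y$ for fixed $\mathbf x$. A saddle point $(\mathbf x^\star,\mathbf y^\star)$ satisfies $\mathbf L(\mathbf x^\star,\mathbf y)\le\mathbf L(\mathbf x^\star,\mathbf y^\star)\le\mathbf L(\mathbf x,\mathbf y^\star)$ for all $\mathbf x,\mathbf y$. $\mathbf G(\mathbf z)=(\nabla_{\mathbf x}\mathbf L(\mathbf x,\mathbf y),-\nabla_{\mathbf y}\mathbf L(\mathbf x,\mathbf y))$; $\mathbf L$ is $R$-smooth if it is differentiable and $\mathbf G$ is $R$-Lipschitz. *)

From HB Require Import structures.
From mathcomp Require Import all_boot all_order all_algebra.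
From mathcomp Require Import all_classical all_reals all_analysis.
Set Implicit Arguments. Unset Strict Implicit. Unset Printing Implicit Defensive.
Import Order.TTheory GRing.Theory Num.Theory.
Import numFieldNormedType.Exports.
Local Open Scope ring_scope.

(* Euclidean squared norm on row vectors R^n (the library's norm on 'rV is the max norm). *)
Definition sqnorm (R : realType) (n : nat) (v : 'rV[R]_n) : R :=
  \sum_(i < n) (v ord0 i) ^+ 2.

Definition sqnormz (R : realType) (n m : nat) (z : 'rV[R]_n * 'rV[R]_m) : R :=
  sqnorm z.1 + sqnorm z.2.

Definition grad_x (R : realType) (n m : nat) (L : 'rV[R]_n -> 'rV[R]_m -> R)
  (x : 'rV[R]_n) (y : 'rV[R]_m) : 'rV[R]_n :=
  \row_i 'D_(delta_mx ord0 i) (fun x' => L x' y) x.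

Definition grad_y (R : realType) (n m : nat) (L : 'rV[R]_n -> 'rV[R]_m -> R)
  (x : 'rV[R]_n) (y : 'rV[R]_m) : 'rV[R]_m :=
  \row_i 'D_(delta_mx ord0 i) (fun y' => L x y') y.

Definition gradL (R : realType) (n m : nat) (L : 'rV[R]_n -> 'rV[R]_m -> R)
  (z : 'rV[R]_n * 'rV[R]_m) : 'rV[R]_n * 'rV[R]_m :=
  (grad_x L z.1 z.2, grad_y L z.1 z.2).

Definition Gop (R : realType) (n m : nat) (L : 'rV[R]_n -> 'rV[R]_m -> R)
  (z : 'rV[R]_n * 'rV[R]_m) : 'rV[R]_n * 'rV[R]_m :=
  (grad_x L z.1 z.2, - grad_y L z.1 z.2).

Definition convex_concave (R : realType) (n m : nat)
  (L : 'rV[R]_n -> 'rV[R]_m -> R) : Prop :=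
  (forall (y : 'rV[R]_m) (x1 x2 : 'rV[R]_n) (t : R), 0 <= t <= 1 ->
     L (t *: x1 + (1 - t) *: x2) y <= t * L x1 y + (1 - t) * L x2 y) /\
  (forall (x : 'rV[R]_n) (y1 y2 : 'rV[R]_m) (t : R), 0 <= t <= 1 ->
     t * L x y1 + (1 - t) * L x y2 <= L x (t *: y1 + (1 - t) *: y2)).

Definition smooth_R (R : realType) (n m : nat) (Rc : R)
  (L : 'rV[R]_n -> 'rV[R]_m -> R) : Prop :=
  (forall z : 'rV[R]_n * 'rV[R]_m,
     differentiable (fun w : 'rV[R]_n * 'rV[R]_m => L w.1 w.2) z) /\
  (forall z w : 'rV[R]_n * 'rV[R]_m,
     Num.sqrt (sqnormz (Gop L z - Gop L w)) <= Rc * Num.sqrt (sqnormz (z - w))).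

Definition saddle_point (R : realType) (n m : nat)
  (L : 'rV[R]_n -> 'rV[R]_m -> R) (xs : 'rV[R]_n) (ys : 'rV[R]_m) : Prop :=
  forall (x : 'rV[R]_n) (y : 'rV[R]_m), L xs y <= L xs ys /\ L xs ys <= L x ys.

Fixpoint alpha (R : realType) (Rc : R) (k : nat) : R :=
  match k with
  | 0%N => (618%:R / 1000%:R) / Rc
  | k'.+1 => let a := alpha Rc k' in
      a * (1 - (1 / ((k'.+1)%:R * (k'.+3)%:R)) *
               ((a ^+ 2 * Rc ^+ 2) / (1 - a ^+ 2 * Rc ^+ 2)))
  end.

Definition half_step (R : realType) (n m : nat) (L : 'rV[R]_n -> 'rV[R]_m -> R)
  (Rc : R) (z0 zk : 'rV[R]_n * 'rV[R]_m) (k : nat) : 'rV[R]_n * 'rV[R]_m :=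
  zk + (k.+2%:R)^-1 *: (z0 - zk) - alpha Rc k *: Gop L zk.

Fixpoint iter_z (R : realType) (n m : nat) (L : 'rV[R]_n -> 'rV[R]_m -> R)
  (Rc : R) (z0 : 'rV[R]_n * 'rV[R]_m) (k : nat) : 'rV[R]_n * 'rV[R]_m :=
  match k with
  | 0%N => z0
  | k'.+1 => let zk := iter_z L Rc z0 k' in
      zk + (k'.+2%:R)^-1 *: (z0 - zk) - alpha Rc k' *: Gop L (half_step L Rc z0 zk k')
  end.

From HB Require Import structures.
From mathcomp Require Import all_boot all_order all_algebra.
From mathcomp Require Import all_classical all_reals all_analysis.
From mathcomp Require Import ring lra.
Set Implicit Arguments.
Unset Strict Implicit.
Unset Printing Implicit Defensive.
Import Order.TTheory GRing.Theory Num.Theory.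
Import numFieldNormedType.Exports.
Local Open Scope ring_scope.

(* Along the iteration, the potential
     V_k = alpha_k (k+1)(k+2)/2 |G z^k|^2 + (k+1) <G z^k, z^k - z^0>
   is nonincreasing: the drop over one step is a nonnegative combination of
   the monotonicity of G between z^k and z^(k+1) (convex-concavity), the
   Lipschitz bound between z^(k+1/2) and z^(k+1), and a square; this only uses
   the recursion for alpha_(k+1) and alpha_k R < 1.  Since G z* = 0, we have
   V_0 = alpha_0 |G z^0|^2 <= 0.618 R |z^0 - z*|^2, and <G z^k, z^k - z*> >= 0
   together with a Cauchy-Schwarz square turns V_k <= V_0 into the bound, as
   soon as alpha_k R >= 0.434.  The products alpha_k R do not depend on R and
   decrease; the lower bound follows from enclosures of the first five of them
   and a telescoping bound on the total decrease afterwards. *)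

Lemma sum_pair (U V : nmodType) (I : Type) (r : seq I) (P : pred I)
    (f : I -> U) (g : I -> V) :
  \sum_(i <- r | P i) (f i, g i) = (\sum_(i <- r | P i) f i, \sum_(i <- r | P i) g i).
Proof.
elim: r => [|a r IHr]; first by rewrite !big_nil.
by rewrite !big_cons; case: (P a); rewrite IHr.
Qed.

Lemma convex_combination_shift (K : pzRingType) (V : lmodType K) (h : K) (d x : V) :
  h *: (d + x) + (1 - h) *: x = h *: d + x.
Proof. by rewrite scalerDr scalerBl scale1r addrACA subrr addr0. Qed.

Section InnerProduct.
Context {R : realType}.

Definition dotr k (p q : 'rV[R]_k) : R := \sum_(i < k) p ord0 i * q ord0 i.

Lemma dotrC k (p q : 'rV[R]_k) : dotr p q = dotr q p.
Proof. by apply: eq_bigr => i _; rewrite mulrC. Qed.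

Lemma dotrDl k (p q r : 'rV[R]_k) : dotr (p + q) r = dotr p r + dotr q r.
Proof. by rewrite /dotr -big_split; apply: eq_bigr => i _; rewrite mxE mulrDl. Qed.

Lemma dotrZl k a (p q : 'rV[R]_k) : dotr (a *: p) q = a * dotr p q.
Proof. by rewrite /dotr mulr_sumr; apply: eq_bigr => i _; rewrite mxE mulrA. Qed.

Lemma dotrNl k (p q : 'rV[R]_k) : dotr (- p) q = - dotr p q.
Proof. by rewrite /dotr -sumrN; apply: eq_bigr => i _; rewrite mxE mulNr. Qed.

Lemma dotrDr k (p q r : 'rV[R]_k) : dotr r (p + q) = dotr r p + dotr r q.
Proof. by rewrite dotrC dotrDl !(dotrC _ r). Qed.

Lemma dotrNr k (p q : 'rV[R]_k) : dotr q (- p) = - dotr q p.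
Proof. by rewrite dotrC dotrNl dotrC. Qed.

Lemma dotr_delta k (p : 'rV[R]_k) i : dotr p (delta_mx ord0 i) = p ord0 i.
Proof.
rewrite /dotr (bigD1 i) //= mxE !eqxx mulr1 big1 ?addr0 // => j /negbTE ji.
by rewrite mxE ji andbF mulr0.
Qed.

Lemma sqnormE k (p : 'rV[R]_k) : sqnorm p = dotr p p.
Proof. by apply: eq_bigr => i _; rewrite expr2. Qed.

Lemma sqnormN k (p : 'rV[R]_k) : sqnorm (- p) = sqnorm p.
Proof. by rewrite !sqnormE dotrNl dotrNr opprK. Qed.

Lemma row_eq0_dotr_ge0 k (p : 'rV[R]_k) : (forall d, 0 <= dotr p d) -> p = 0.
Proof.
move=> p_ge0; apply/rowP => i; rewrite mxE -dotr_delta; apply/eqP.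
by rewrite eq_le p_ge0 andbT -oppr_ge0 -dotrNr.
Qed.

Context {n m : nat}.
Local Notation Z := ('rV[R]_n * 'rV[R]_m)%type.

Definition dotz (u v : Z) : R := dotr u.1 v.1 + dotr u.2 v.2.

Lemma dotzC (u v : Z) : dotz u v = dotz v u.
Proof. by rewrite /dotz dotrC (dotrC u.2). Qed.

Lemma dotzDl (u v w : Z) : dotz (u + v) w = dotz u w + dotz v w.
Proof. by rewrite /dotz /= !dotrDl; ring. Qed.

Lemma dotzZl a (u w : Z) : dotz (a *: u) w = a * dotz u w.
Proof. by rewrite /dotz /= !dotrZl; ring. Qed.

Lemma dotzNl (u w : Z) : dotz (- u) w = - dotz u w.
Proof. by rewrite /dotz /= !dotrNl; ring. Qed.

Lemma dotzDr (u v w : Z) : dotz w (u + v) = dotz w u + dotz w v.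
Proof. by rewrite dotzC dotzDl !(dotzC w). Qed.

Lemma dotzZr a (u w : Z) : dotz w (a *: u) = a * dotz w u.
Proof. by rewrite dotzC dotzZl dotzC. Qed.

Lemma dotzNr (u w : Z) : dotz w (- u) = - dotz w u.
Proof. by rewrite dotzC dotzNl dotzC. Qed.

Lemma sqnormzE (u : Z) : sqnormz u = dotz u u.
Proof. by rewrite /sqnormz /dotz !sqnormE. Qed.

Lemma dotzz_ge0 (u : Z) : 0 <= dotz u u.
Proof. by rewrite -sqnormzE addr_ge0 // sumr_ge0 // => i _; rewrite sqr_ge0. Qed.

End InnerProduct.

Section DirectionalDerivative.
Context {R : realType} {V : normedModType R}.

Lemma derive_le_of_increments (f : V -> R) x v c : derivable f x v ->
  (forall h, 0 < h < 1 -> f (h *: v + x) - f x <= h * c) -> 'D_v f x <= c.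
Proof.
move=> dfv incr; apply: (cvgr_to_le (cvg_dnbhs_at_right dfv)); near=> h.
have h_gt0 : 0 < h by near: h; exact: nbhs_right_gt.
have h_lt1 : h < 1 by near: h; exact: nbhs_right_lt.
by rewrite /= -[c](mulKf (lt0r_neq0 h_gt0)) ler_pM2l ?invr_gt0 // incr ?h_gt0.
Unshelve. all: by end_near.
Qed.

Lemma derive_ge_of_increments (f : V -> R) x v c : derivable f x v ->
  (forall h, 0 < h < 1 -> h * c <= f (h *: v + x) - f x) -> c <= 'D_v f x.
Proof.
move=> dfv incr; apply: (cvgr_to_ge (cvg_dnbhs_at_right dfv)); near=> h.
have h_gt0 : 0 < h by near: h; exact: nbhs_right_gt.
have h_lt1 : h < 1 by near: h; exact: nbhs_right_lt.
by rewrite /= -[c](mulKf (lt0r_neq0 h_gt0)) ler_pM2l ?invr_gt0 // incr ?h_gt0.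
Unshelve. all: by end_near.
Qed.

End DirectionalDerivative.

Section Gradient.
Context {R : realType} {n m : nat} (L : 'rV[R]_n -> 'rV[R]_m -> R).
Local Notation Z := ('rV[R]_n * 'rV[R]_m)%type.
Let F (w : Z) := L w.1 w.2.

Lemma sqnormz_gradL z : sqnormz (gradL L z) = dotz (Gop L z) (Gop L z).
Proof. by rewrite -sqnormzE /sqnormz /= sqnormN. Qed.

Hypothesis diffF : forall z : Z, differentiable F z.

Lemma quotient_x (x v : 'rV[R]_n) (y : 'rV[R]_m) :
  (fun h : R => h^-1 *: (((fun x' => L x' y) \o shift x) (h *: v) - L x y)) =
  (fun h : R => h^-1 *: ((F \o shift (x, y)) (h *: ((v, 0) : Z)) - F (x, y))).
Proof. by apply/funext => h /=; rewrite /F /= scaler0 add0r. Qed.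

Lemma quotient_y (x : 'rV[R]_n) (y v : 'rV[R]_m) :
  (fun h : R => h^-1 *: (((fun y' => L x y') \o shift y) (h *: v) - L x y)) =
  (fun h : R => h^-1 *: ((F \o shift (x, y)) (h *: ((0, v) : Z)) - F (x, y))).
Proof. by apply/funext => h /=; rewrite /F /= scaler0 add0r. Qed.

Lemma derivable_x x y v : derivable (fun x' => L x' y) x v.
Proof. by rewrite /derivable quotient_x; exact: diff_derivable. Qed.

Lemma derivable_y x y v : derivable (fun y' => L x y') y v.
Proof. by rewrite /derivable quotient_y; exact: diff_derivable. Qed.

Lemma derive_x x y v : 'D_v (fun x' => L x' y) x = 'd F (x, y) ((v, 0) : Z).
Proof. by rewrite /derive quotient_x -deriveE. Qed.

Lemma derive_y x y v : 'D_v (fun y' => L x y') y = 'd F (x, y) ((0, v) : Z).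
Proof. by rewrite /derive quotient_y -deriveE. Qed.

Lemma dotr_grad_x x y v : dotr (grad_x L x y) v = 'D_v (fun x' => L x' y) x.
Proof.
rewrite derive_x; have -> : ((v, 0) : Z) = \sum_(i < n) v 0 i *: ((delta_mx 0 i, 0) : Z).
  by rewrite sum_pair -row_sum_delta big1 // => i _; rewrite scaler0.
rewrite linear_sum; apply: eq_bigr => i _.
by rewrite linearZ /= mxE derive_x mulrC.
Qed.

Lemma dotr_grad_y x y v : dotr (grad_y L x y) v = 'D_v (fun y' => L x y') y.
Proof.
rewrite derive_y; have -> : ((0, v) : Z) = \sum_(i < m) v 0 i *: ((0, delta_mx 0 i) : Z).
  by rewrite sum_pair -row_sum_delta big1 // => i _; rewrite scaler0.
rewrite linear_sum; apply: eq_bigr => i _.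
by rewrite linearZ /= mxE derive_y mulrC.
Qed.

Hypothesis convL : convex_concave L.

Lemma dotr_grad_x_le x y d : dotr (grad_x L x y) d <= L (d + x) y - L x y.
Proof.
rewrite dotr_grad_x; apply: derive_le_of_increments; first exact: derivable_x.
move=> h /andP[h_gt0 h_lt1]; have := convL.1 y (d + x) x h.
by rewrite convex_combination_shift => /(_ ltac:(apply/andP; split; lra)); lra.
Qed.

Lemma dotr_grad_y_ge x y d : L x (d + y) - L x y <= dotr (grad_y L x y) d.
Proof.
rewrite dotr_grad_y; apply: derive_ge_of_increments; first exact: derivable_y.
move=> h /andP[h_gt0 h_lt1]; have := convL.2 x (d + y) y h.
by rewrite convex_combination_shift => /(_ ltac:(apply/andP; split; lra)); lra.
Qed.

Lemma Gop_monotone (z w : Z) : 0 <= dotz (Gop L z - Gop L w) (z - w).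
Proof.
case: z w => x y [x' y'].
have := dotr_grad_x_le x y (x' - x); have := dotr_grad_y_ge x y (y' - y).
have := dotr_grad_x_le x' y' (x - x'); have := dotr_grad_y_ge x' y' (y - y').
rewrite /dotz /Gop /= !subrK !(dotrDl, dotrNl, dotrDr, dotrNr); lra.
Qed.

Lemma Gop_saddle_point xs ys : saddle_point L xs ys -> Gop L (xs, ys) = 0.
Proof.
move=> saddle; have grad_x0 : grad_x L xs ys = 0.
  apply: row_eq0_dotr_ge0 => d; rewrite dotr_grad_x.
  apply: derive_ge_of_increments; first exact: derivable_x.
  by move=> h _; rewrite mulr0 subr_ge0; exact: (saddle _ _).2.
have grad_y0 : grad_y L xs ys = 0.
  apply/oppr_inj; rewrite oppr0; apply: row_eq0_dotr_ge0 => d.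
  rewrite dotrNl oppr_ge0 dotr_grad_y.
  apply: derive_le_of_increments; first exact: derivable_y.
  by move=> h _; rewrite mulr0 subr_le0; exact: (saddle _ _).1.
by rewrite /Gop /= grad_x0 grad_y0 oppr0.
Qed.

End Gradient.

Section StepSizes.
Context {R : realType}.

Definition beta_next (c b : R) := b * (1 - 1 / c * (b ^+ 2 / (1 - b ^+ 2))).

Fixpoint beta (k : nat) : R :=
  if k is k'.+1 then beta_next (k'.+1%:R * k'.+3%:R) (beta k') else 618%:R / 1000%:R.

Lemma alphaE (Rc : R) k : 0 < Rc -> alpha Rc k * Rc = beta k.
Proof.
move=> Rc_gt0; elim: k => [|k IHk] /=; first by rewrite divfK ?gt_eqF.
by rewrite -IHk /beta_next exprMn; ring.
Qed.

Lemma beta0 : beta 0 = 618%:R / 1000%:R.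
Proof. by []. Qed.

Lemma beta_nextE (c b : R) : 0 < c -> b ^+ 2 < 1 ->
  beta_next c b = b - b ^+ 3 / (c * (1 - b ^+ 2)).
Proof. by move=> c_gt0 b2_lt1; rewrite /beta_next; field; rewrite !gt_eqF ?subr_gt0. Qed.

Lemma beta_next_bounds (c b U Phi : R) : 0 < c -> 0 < b -> b <= U -> U < 1 ->
  U ^+ 3 <= Phi * (1 - U ^+ 2) -> b - Phi / c <= beta_next c b <= b.
Proof.
move=> c_gt0 b_gt0 bU U_lt1 hPhi.
have U2_lt1 : U ^+ 2 < 1 by rewrite expr2; nra.
have b2U2 : b ^+ 2 <= U ^+ 2 by rewrite lerXn2r ?nnegrE //; lra.
have b3U3 : b ^+ 3 <= U ^+ 3 by rewrite lerXn2r ?nnegrE //; lra.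
have Phi_ge0 : 0 <= Phi.
  by rewrite -(pmulr_lge0 _ (_ : 0 < 1 - U ^+ 2)) ?subr_gt0 // (le_trans _ hPhi) ?exprn_ge0 //; lra.
have den_gt0 : 0 < c * (1 - b ^+ 2) by rewrite mulr_gt0 // subr_gt0; lra.
have drop_ge0 : 0 <= b ^+ 3 / (c * (1 - b ^+ 2)) by rewrite divr_ge0 ?exprn_ge0 ?ltW.
have drop_le : b ^+ 3 / (c * (1 - b ^+ 2)) <= Phi / c.
  rewrite ler_pdivrMr // mulrA divfK ?gt_eqF //.
  by apply: (le_trans b3U3); apply: (le_trans hPhi); apply: ler_wpM2l; lra.
rewrite beta_nextE //; lra.
Qed.

Lemma beta_next_enclosure (c b l u l' u' : R) : 0 < c -> 0 < l -> l <= b <= u -> u < 1 ->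
  u ^+ 3 <= (l - l') * c * (1 - u ^+ 2) -> (u - u') * c * (1 - l ^+ 2) <= l ^+ 3 ->
  l' <= beta_next c b <= u'.
Proof.
move=> c_gt0 l_gt0 /andP[lb bu] u_lt1 hl hu.
have u2_lt1 : u ^+ 2 < 1 by rewrite expr2; nra.
have l2b2 : l ^+ 2 <= b ^+ 2 by rewrite lerXn2r ?nnegrE //; lra.
have b2u2 : b ^+ 2 <= u ^+ 2 by rewrite lerXn2r ?nnegrE //; lra.
have l3b3 : l ^+ 3 <= b ^+ 3 by rewrite lerXn2r ?nnegrE //; lra.
have b3u3 : b ^+ 3 <= u ^+ 3 by rewrite lerXn2r ?nnegrE //; lra.
have den_gt0 : 0 < c * (1 - b ^+ 2) by rewrite mulr_gt0 // subr_gt0; lra.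
have drop_ge0 : 0 <= b ^+ 3 / (c * (1 - b ^+ 2)) by rewrite divr_ge0 ?exprn_ge0 ?ltW //; lra.
rewrite beta_nextE //; last by lra.
apply/andP; split.
- suff : b ^+ 3 / (c * (1 - b ^+ 2)) <= l - l' by lra.
  have lc_ge0 : 0 <= (l - l') * c.
    by rewrite -(pmulr_lge0 _ (_ : 0 < 1 - u ^+ 2)) ?subr_gt0 // (le_trans _ hl) ?exprn_ge0 //; lra.
  rewrite ler_pdivrMr //; apply: (le_trans b3u3); apply: (le_trans hl).
  by rewrite mulrA ler_wpM2l //; lra.
- suff : u - u' <= b ^+ 3 / (c * (1 - b ^+ 2)) by lra.
  have [u'u|uu'] := lerP u' u; last by lra.
  have uc_ge0 : 0 <= (u - u') * c by rewrite mulr_ge0 //; lra.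
  rewrite ler_pdivlMr //; apply: le_trans l3b3; apply: le_trans hu.
  by rewrite mulrA ler_wpM2l //; lra.
Qed.

(* The tail sum of [1 / ((j + 1) (j + 3))] over [j >= k]. *)
Definition inv_tail (k : nat) : R := (k.+1%:R^-1 + k.+2%:R^-1) / 2.

Lemma inv_tailS k : inv_tail k - inv_tail k.+1 = 1 / (k.+1%:R * k.+3%:R).
Proof.
rewrite /inv_tail -!natr1; have := ler0n R k.
by move=> k_ge0; field; rewrite !gt_eqF //; lra.
Qed.

Lemma inv_tail_ge0 k : 0 <= inv_tail k.
Proof. by rewrite /inv_tail divr_ge0 ?addr_ge0 ?invr_ge0. Qed.

Lemma beta_tail (K : nat) (U Phi : R) : beta K <= U -> 0 <= Phi -> U < 1 ->
  U ^+ 3 <= Phi * (1 - U ^+ 2) -> Phi * inv_tail K < beta K ->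
  forall j, beta K - Phi * inv_tail K <= beta (j + K) <= U.
Proof.
move=> bK_le Phi_ge0 U_lt1 hPhi bK_gt j.
suff /andP[lo up] : beta K - Phi * (inv_tail K - inv_tail (j + K)) <= beta (j + K) <= U.
  by have := mulr_ge0 Phi_ge0 (inv_tail_ge0 (j + K)); rewrite up andbT; lra.
elim: j => [|j /andP[lo up]]; first by rewrite add0n subrr mulr0 subr0 lexx.
have b_gt0 : 0 < beta (j + K).
  by have := mulr_ge0 Phi_ge0 (inv_tail_ge0 (j + K)); lra.
have c_gt0 : 0 < (j + K).+1%:R * (j + K).+3%:R :> R by rewrite mulr_gt0 ?ltr0n.
have /andP[lo' up'] := beta_next_bounds c_gt0 b_gt0 up U_lt1 hPhi.
rewrite addSn /= (le_trans up') // andbT.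
have drop : Phi / ((j + K).+1%:R * (j + K).+3%:R) =
    Phi * (inv_tail (j + K) - inv_tail (j + K).+1) by rewrite inv_tailS mul1r.
by rewrite drop in lo'; lra.
Qed.

Lemma beta_gt0_le k : 0 < beta k <= 618%:R / 1000%:R.
Proof.
have /andP[lo up] :
    beta 0 - 382%:R / 1000%:R * inv_tail 0 <= beta (k + 0) <= 618%:R / 1000%:R.
  by apply: beta_tail; rewrite /inv_tail ?beta0; lra.
by rewrite addn0 /inv_tail beta0 in lo up; rewrite up andbT; lra.
Qed.

Lemma beta_next_le (c b : R) : 0 < c -> 0 <= b -> b ^+ 2 < 1 -> beta_next c b <= b.
Proof.
move=> c_gt0 b_ge0 b2_lt1; rewrite beta_nextE // gerBl.
by rewrite divr_ge0 ?exprn_ge0 // mulr_ge0 ?ltW //; lra.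
Qed.

Lemma beta_nonincreasing : nonincreasing_seq beta.
Proof.
apply/nonincreasing_seqP => k /=; have /andP[b_gt0 b_le] := beta_gt0_le k.
by rewrite beta_next_le ?ltW ?mulr_gt0 ?ltr0n //; nra.
Qed.

Lemma beta_bounds k : 217%:R / 500%:R <= beta k <= 618%:R / 1000%:R.
Proof.
(* Starting the tail estimate at [beta 0] would only give [beta k >= 0.33]. *)
have /andP[lo5 up5] : 2265%:R / 5000%:R <= beta 5 <= 2270%:R / 5000%:R.
  have b0 : 618%:R / 1000%:R <= beta 0 <= 618%:R / 1000%:R by rewrite lexx.
  (* [clear] stops [lra] from unfolding the [beta i] of the context. *)
  have b1 : 2453%:R / 5000%:R <= beta 1 <= 2454%:R / 5000%:R.
    by apply: (beta_next_enclosure _ _ b0); clear; lra.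
  have b2 : 2355%:R / 5000%:R <= beta 2 <= 2357%:R / 5000%:R.
    by apply: (beta_next_enclosure _ _ b1); clear; lra.
  have b3 : 2310%:R / 5000%:R <= beta 3 <= 2313%:R / 5000%:R.
    by apply: (beta_next_enclosure _ _ b2); clear; lra.
  have b4 : 2283%:R / 5000%:R <= beta 4 <= 2287%:R / 5000%:R.
    by apply: (beta_next_enclosure _ _ b3); clear; lra.
  by apply: (beta_next_enclosure _ _ b4); clear; lra.
have /andP[lo _] : beta 5 - 118%:R / 1000%:R * inv_tail 5 <= beta (k + 5) <= 2270%:R / 5000%:R.
  by apply: (beta_tail up5); rewrite /inv_tail; move: lo5; clear; lra.
have /andP[_ ->] := beta_gt0_le k; rewrite andbT.
apply: le_trans (beta_nonincreasing (leq_addr 5 k)).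
by move: lo5 lo; rewrite /inv_tail; clear; lra.
Qed.

End StepSizes.

Lemma potential_step_scalar (R : realType) (a Rc N uu ue uh hh ww wh we : R) :
  0 < a -> 0 < Rc -> a * Rc < 1 -> 1 <= N ->
  let r := a ^+ 2 * Rc ^+ 2 in
  let a' := a * (1 - 1 / (N * (N + 2)) * (r / (1 - r))) in
  let s := 1 / r - 1 in
  let t := (N + 1) / N - 1 / r in
  0 <= - (N + 1)^-1 * we - a * wh + (N + 1)^-1 * ue + a * uh ->
  ww - 2 * wh + hh <= r * (uu - 2 * uh + hh) ->
  0 <= s ^+ 2 * hh + 2 * s * t * wh + t ^+ 2 * ww ->
  a' * (N + 1) * (N + 2) / 2 * ww + (N + 1) * ((1 - (N + 1)^-1) * we - a * wh)
    <= a * N * (N + 1) / 2 * uu + N * ue.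
Proof.
move=> a_gt0 Rc_gt0 aRc_lt1 N_ge1 r a' s t monot lipsch square.
have r_gt0 : 0 < r by rewrite mulr_gt0 ?exprn_gt0.
have r_lt1 : r < 1.
  by have := mulr_gt0 a_gt0 Rc_gt0; rewrite /r -exprMn expr2; nra.
have s_gt0 : 0 < s by rewrite /s subr_gt0 mul1r invf_gt1.
rewrite -subr_ge0.
(* The drop is a nonnegative combination of the monotonicity term, the Lipschitz
   term and the square. *)
have -> : a * N * (N + 1) / 2 * uu + N * ue -
    (a' * (N + 1) * (N + 2) / 2 * ww + (N + 1) * ((1 - (N + 1)^-1) * we - a * wh)) =
  N * (N + 1) * (- (N + 1)^-1 * we - a * wh + (N + 1)^-1 * ue + a * uh) +
  a * N * (N + 1) * ((2 * r)^-1 * (r * (uu - 2 * uh + hh) - (ww - 2 * wh + hh))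
    + (s ^+ 2 * hh + 2 * s * t * wh + t ^+ 2 * ww) / (2 * s)).
  by rewrite /a' /s /t; field; rewrite !gt_eqF //; lra.
apply: addr_ge0; first by rewrite !mulr_ge0 //; lra.
by rewrite !mulr_ge0 ?addr_ge0 ?mulr_ge0 ?divr_ge0 ?subr_ge0 ?invr_ge0 //; lra.
Qed.

Lemma sqnorm_bound_scalar (R : realType) (a Rc N gg ge D : R) :
  0 < a -> 217%:R / 500%:R <= a * Rc -> 1 <= N -> 0 <= D ->
  a * N * (N + 1) / 2 * gg + N * ge <= 618%:R / 1000%:R * Rc * D ->
  0 <= (a * N * (N + 1)) ^+ 2 * gg + 4 * (a * N * (N + 1)) * N * ge + 4 * N ^+ 2 * D ->
  gg <= 27%:R * Rc ^+ 2 * D / (N * (N + 1)).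
Proof.
move=> a_gt0 aRc_ge N_ge1 D_ge0 pot square.
have P_gt0 : 0 < N * (N + 1) by rewrite mulr_gt0 //; lra.
have ND : N ^+ 2 * D <= N * (N + 1) * D by rewrite ler_wpM2r // expr2 ler_wpM2l; lra.
have pot4 := ler_wpM2l (ltW (mulr_gt0 (mulr_gt0 (ltr0Sn R 3) a_gt0) P_gt0)) pot.
have H1 : a ^+ 2 * (N * (N + 1)) * gg <= 4 * (618%:R / 1000%:R * (a * Rc) + 1) * D.
  by rewrite -(ler_pM2l P_gt0); lra.
(* The positive root of [27 b^2 - 2.472 b - 4] is about [0.4334]. *)
have key : 4 * (618%:R / 1000%:R * (a * Rc) + 1) <= 27%:R * (a * Rc) ^+ 2.
  by have := sqr_ge0 (a * Rc - 217%:R / 500%:R); move: (a * Rc) aRc_ge => b; lra.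
rewrite ler_pdivlMr // -(ler_pM2l (exprn_gt0 2 a_gt0)).
by have := le_trans H1 (ler_wpM2r D_ge0 key); rewrite exprMn; lra.
Qed.

Section Potential.
Context {R : realType} {n m : nat}.
Local Notation Z := ('rV[R]_n * 'rV[R]_m)%type.
Variable z0 : Z.

Definition potential (a N : R) (g z : Z) : R :=
  a * N * (N + 1) / 2 * dotz g g + N * dotz g (z - z0).

Lemma potential_step (Rc a N : R) (zk zh z1 u h w : Z) :
  0 < a -> 0 < Rc -> a * Rc < 1 -> 1 <= N ->
  zh = zk + (N + 1)^-1 *: (z0 - zk) - a *: u ->
  z1 = zk + (N + 1)^-1 *: (z0 - zk) - a *: h ->
  0 <= dotz (w - u) (z1 - zk) ->
  dotz (w - h) (w - h) <= Rc ^+ 2 * dotz (z1 - zh) (z1 - zh) ->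
  potential (a * (1 - 1 / (N * (N + 2)) * (a ^+ 2 * Rc ^+ 2 / (1 - a ^+ 2 * Rc ^+ 2))))
    (N + 1) w z1 <= potential a N u zk.
Proof.
move=> a_gt0 Rc_gt0 aRc_lt1 N_ge1 def_zh def_z1 monot lipsch.
rewrite /potential; set e := zk - z0.
have step_def : z1 - zk = - (N + 1)^-1 *: e + - a *: h.
  by rewrite def_z1; apply: injective_projections; apply/rowP => i; rewrite !mxE; ring.
have half_def : z1 - zh = a *: u + - a *: h.
  by rewrite def_z1 def_zh; apply: injective_projections; apply/rowP => i; rewrite !mxE; ring.
have anchor_def : z1 - z0 = (1 - (N + 1)^-1) *: e + - a *: h.
  by rewrite def_z1; apply: injective_projections; apply/rowP => i; rewrite !mxE; ring.
clearbody e.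
have square := dotzz_ge0 ((1 / (a ^+ 2 * Rc ^+ 2) - 1) *: h +
  ((N + 1) / N - 1 / (a ^+ 2 * Rc ^+ 2)) *: w).
rewrite step_def in monot; rewrite half_def in lipsch; rewrite anchor_def.
rewrite !(dotzDl, dotzDr, dotzZl, dotzZr, dotzNl, dotzNr) in monot lipsch square *.
rewrite ?(dotzC h w) ?(dotzC h u) in monot lipsch square *.
have /= := potential_step_scalar (uu := dotz u u) (ue := dotz u e) (uh := dotz u h)
  (hh := dotz h h) (ww := dotz w w) (wh := dotz w h) (we := dotz w e) a_gt0 Rc_gt0 aRc_lt1 N_ge1.
by move=> /(_ ltac:(lra) ltac:(lra) ltac:(lra)); lra.
Qed.

Lemma sqnorm_bound_of_potential (Rc a N : R) (zs z g : Z) :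
  0 < a -> 217%:R / 500%:R <= a * Rc -> 1 <= N -> 0 <= dotz g (z - zs) ->
  potential a N g z <= 618%:R / 1000%:R * Rc * dotz (z0 - zs) (z0 - zs) ->
  dotz g g <= 27%:R * Rc ^+ 2 * dotz (z0 - zs) (z0 - zs) / (N * (N + 1)).
Proof.
move=> a_gt0 aRc_ge N_ge1 monot pot.
have dist_sym : dotz (z0 - zs) (z0 - zs) = dotz (zs - z0) (zs - z0).
  by rewrite -opprB dotzNl dotzNr opprK.
have anchor_split : z - z0 = (z - zs) + (zs - z0) by rewrite addrA subrK.
rewrite /potential dist_sym in pot *; move: (zs - z0) anchor_split pot => e -> pot.
apply: (sqnorm_bound_scalar (ge := dotz g e) a_gt0 aRc_ge N_ge1 (dotzz_ge0 e)).
  have := mulr_ge0 (le_trans ler01 N_ge1) monot.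
  by move: pot; rewrite dotzDr; lra.
have := dotzz_ge0 ((a * N * (N + 1)) *: g + (2 * N) *: e).
by rewrite !(dotzDl, dotzDr, dotzZl, dotzZr) (dotzC e g); lra.
Qed.

End Potential.

Section Iterates.
Context {R : realType} {n m : nat} (Rc : R) (L : 'rV[R]_n -> 'rV[R]_m -> R).
Local Notation Z := ('rV[R]_n * 'rV[R]_m)%type.
Hypotheses (Rc_gt0 : 0 < Rc) (smoothL : smooth_R Rc L) (convL : convex_concave L).

Lemma alpha_bounds k : 217%:R / 500%:R <= alpha Rc k * Rc <= 618%:R / 1000%:R.
Proof. by rewrite alphaE // beta_bounds. Qed.

Lemma alpha_gt0 k : 0 < alpha Rc k.
Proof.
have /andP[lo _] := alpha_bounds k.
by rewrite -(pmulr_lgt0 _ Rc_gt0); apply: lt_le_trans lo; lra.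
Qed.

Lemma Gop_lipschitz_sq (p q : Z) :
  dotz (Gop L p - Gop L q) (Gop L p - Gop L q) <= Rc ^+ 2 * dotz (p - q) (p - q).
Proof.
have := smoothL.2 p q; rewrite !sqnormzE => lip.
rewrite -(sqr_sqrtr (dotzz_ge0 _)) -[dotz (p - q) _](sqr_sqrtr (dotzz_ge0 _)) -exprMn.
by rewrite lerXn2r // nnegrE ?sqrtr_ge0 // mulr_ge0 ?sqrtr_ge0 ?ltW.
Qed.

Variable z0 : Z.
Let z := iter_z L Rc z0.

Lemma potential_iter_nonincreasing :
  nonincreasing_seq (fun k => potential z0 (alpha Rc k) k.+1%:R (Gop L (z k)) (z k)).
Proof.
apply/nonincreasing_seqP => k.
have k2E : k.+2%:R = k.+1%:R + 1 :> R by rewrite natr1.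
have alphaS : alpha Rc k.+1 = alpha Rc k * (1 - 1 / (k.+1%:R * (k.+1%:R + 2)) *
    (alpha Rc k ^+ 2 * Rc ^+ 2 / (1 - alpha Rc k ^+ 2 * Rc ^+ 2))).
  by rewrite /= -natrD addn2.
have /andP[_ aRc_le] := alpha_bounds k.
rewrite k2E alphaS; apply: (potential_step (zh := half_step L Rc z0 (z k) k)).
- exact: alpha_gt0.
- exact: Rc_gt0.
- by apply: le_lt_trans aRc_le _; lra.
- by rewrite ler1n.
- by rewrite /half_step k2E.
- by rewrite /z /= k2E.
- exact: Gop_monotone smoothL.1 convL _ _.
- exact: Gop_lipschitz_sq.
Qed.

Lemma potential_iter0_le (zs : Z) : Gop L zs = 0 ->
  potential z0 (alpha Rc 0) 1%:R (Gop L z0) z0 <= 618%:R / 1000%:R * Rc * dotz (z0 - zs) (z0 - zs).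
Proof.
move=> G0; have := Gop_lipschitz_sq z0 zs; rewrite G0 subr0.
set D := dotz (z0 - zs) _ => lip.
have coefE : alpha Rc 0 * 1%:R * (1%:R + 1) / 2 = 618%:R / 1000%:R / Rc.
  by rewrite /=; field; rewrite gt_eqF.
have -> : 618%:R / 1000%:R * Rc * D = 618%:R / 1000%:R / Rc * (Rc ^+ 2 * D).
  by field; rewrite gt_eqF.
rewrite /potential subrr -(scale0r 0) dotzZr mul0r mulr0 addr0 coefE.
by apply: ler_wpM2l lip; apply: divr_ge0 (ltW Rc_gt0); lra.
Qed.

End Iterates.

Theorem corollary2 (R : realType) (n m : nat) (Rc : R)
  (L : 'rV[R]_n -> 'rV[R]_m -> R) (xs : 'rV[R]_n) (ys : 'rV[R]_m)
  (z0 : 'rV[R]_n * 'rV[R]_m) :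
  0 < Rc -> smooth_R Rc L -> convex_concave L -> saddle_point L xs ys ->
  forall k : nat,
    sqnormz (gradL L (iter_z L Rc z0 k)) <=
      27%:R * Rc ^+ 2 * sqnormz (z0 - (xs, ys)) / (k.+1%:R * k.+2%:R).
Proof.
move=> Rc_gt0 smoothL convL saddle k.
have G0 : Gop L (xs, ys) = 0 := Gop_saddle_point smoothL.1 saddle.
rewrite sqnormz_gradL sqnormzE -[k.+2%:R]natr1.
apply: (sqnorm_bound_of_potential (z := iter_z L Rc z0 k) (alpha_gt0 Rc_gt0 k)).
- by have /andP[] := alpha_bounds Rc_gt0 k.
- by rewrite ler1n.
- by have := Gop_monotone smoothL.1 convL (iter_z L Rc z0 k) (xs, ys); rewrite G0 subr0.
- apply: le_trans (potential_iter_nonincreasing Rc_gt0 smoothL convL z0 (leq0n k)) _.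
  exact: potential_iter0_le.
Qed.
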